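(* Let $M=(S,\mathrm{Act},P)$ be an MDP, $T\subseteq S$, $\mathrm{rew}\colon S\to\mathbb{R}_{\ge0}$. Let $(x,r,\sigma)$ with $x\in[0,\infty]^S$, $r\in\mathbb{N}_\infty^S$, and $\sigma$ a strategy satisfy: (1) $D^{\sigma}(r)\le r$; (2) $E^{\sigma}(x)\le x$; (3) for all $s\in S$, $x(s)<\infty$ implies $r(s)<\infty$ (inequalities pointwise). Then for all $s\in S$: $\mathbb{E}^{\min}_s(\Diamond T)\le\mathbb{E}^{\sigma}_s(\Diamond T)\le x(s)$.
   Context: An MDP is a tuple $M=(S,\mathrm{Act},P)$ with $S$ finite, $\mathrm{Act}$ finite, $P\colon S\times\mathrm{Act}\times S\to[0,1]$ with $\sum_{s'}P(s,a,s')\in\{0,1\}$; $\mathrm{Act}(s)=\{a\mid\sum_{s'}P(s,a,s')=1\}$ is nonempty for all $s$; $\mathrm{Post}(s,a)=\{s'\mid P(s,a,s')>0\}$. A strategy is $\sigma\colon S\to\mathrm{Act}$ with $\sigma(s)\in\mathrm{Act}(s)$, inducing a Markov chain with transitions $P(s,\sigma(s),\cdot)$. For an infinite path $s_0s_1\ldots$, the accumulated reward is $\sum_{k=0}^{n-1}\mathrm{rew}(s_k)$ with $n=\min\{i\mid s_i\in T\}$ if $T$ is visited, and $\infty$ otherwise; $\mathbb{E}^\sigma_s(\Diamond T)$ is its expectation under $\sigma$ from $s$, and $\mathbb{E}^{\min}_s(\Diamond T)=\min_\sigma\mathbb{E}^\sigma_s(\Diamond T)$. $E^{\sigma}(x)(s)=0$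 for $s\in T$ and $\mathrm{rew}(s)+\sum_{s'\in\mathrm{Post}(s,\sigma(s))}P(s,\sigma(s),s')x(s')$ for $s\notin T$, with $p\cdot\infty=\infty$ for $p>0$, $a+\infty=\infty$. $\mathbb{N}_\infty=\mathbb{N}\cup\{\infty\}$, $1+\infty=\infty$; $D^{\sigma}(r)(s)=0$ for $s\in T$ and $1+\min_{s'\in\mathrm{Post}(s,\sigma(s))}r(s')$ for $s\notin T$. *)

From HB Require Import structures.
From mathcomp Require Import all_boot all_order all_algebra.
From mathcomp Require Import boolp classical_sets reals ereal sequences.
Set Implicit Arguments. Unset Strict Implicit. Unset Printing Implicit Defensive.
Import Order.TTheory GRing.Theory Num.Theory.
Local Open Scope ring_scope.
Local Open Scope classical_set_scope.

Definition is_MDP (R : realType) (S A : finType) (P : S -> A -> S -> R) : Prop :=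
  [/\ (forall s a s', 0 <= P s a s' <= 1),
      (forall s a, \sum_(s' : S) P s a s' = 0 \/ \sum_(s' : S) P s a s' = 1)
    & (forall s, exists a, \sum_(s' : S) P s a s' = 1)].

Definition enabled (R : realType) (S A : finType) (P : S -> A -> S -> R)
  (s : S) (a : A) : bool := \sum_(s' : S) P s a s' == 1.

Definition is_strategy (R : realType) (S A : finType) (P : S -> A -> S -> R)
  (sigma : S -> A) : Prop := forall s, enabled P s (sigma s).

Fixpoint path_prob (R : realType) (S A : finType) (P : S -> A -> S -> R)
  (sigma : S -> A) (x : S) (p : seq S) : R :=
  match p with
  | [::] => 1
  | y :: p' => P x (sigma x) y * path_prob P sigma y p'
  end.

Definition avoids (S : finType) (T : {set S}) (p : seq S) : bool :=
  all (fun t => t \notin T) p.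

Definition first_hit (S : finType) (T : {set S}) (s : S) (t : seq S) : bool :=
  avoids T (belast s t) && (last s t \in T).

Definition reach_prob (R : realType) (S A : finType) (P : S -> A -> S -> R)
  (sigma : S -> A) (T : {set S}) (s : S) : \bar R :=
  (\sum_(0 <= n <oo)
     (\sum_(t : n.-tuple S | first_hit T s t) path_prob P sigma s t)%:E)%E.

Definition step_reward (R : realType) (S A : finType) (P : S -> A -> S -> R)
  (sigma : S -> A) (T : {set S}) (rew : S -> R) (s : S) (n : nat) : R :=
  \sum_(t : n.-tuple S | avoids T (s :: t)) path_prob P sigma s t * rew (last s t).

(* If T is missed with positive probability the accumulated reward is
   infinite on a set of positive measure, hence the expectation is +oo;
   otherwise (monotone convergence) it is the sum over n of the expected
   reward collected at step n before reaching T. *)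
Definition exp_reward (R : realType) (S A : finType) (P : S -> A -> S -> R)
  (sigma : S -> A) (T : {set S}) (rew : S -> R) (s : S) : \bar R :=
  if reach_prob P sigma T s == 1%E
  then (\sum_(0 <= n <oo) (step_reward P sigma T rew s n)%:E)%E
  else (+oo)%E.

Definition exp_reward_min (R : realType) (S A : finType) (P : S -> A -> S -> R)
  (T : {set S}) (rew : S -> R) (s : S) : \bar R :=
  ereal_inf [set exp_reward P sigma T rew s | sigma in [set sigma | is_strategy P sigma]].

Definition Eop (R : realType) (S A : finType) (P : S -> A -> S -> R)
  (sigma : S -> A) (T : {set S}) (rew : S -> R) (x : S -> \bar R) (s : S) : \bar R :=
  if s \in T then 0%E
  else ((rew s)%:E + \sum_(s' | P s (sigma s) s' != 0%R) (P s (sigma s) s')%:E * x s')%E.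

(* N_oo = option nat, None = oo *)
Definition ninf := option nat.
Definition ninf_le (a b : ninf) : bool :=
  match a, b with
  | _, None => true
  | None, Some _ => false
  | Some m, Some n => (m <= n)%N
  end.
Definition ninf_min (a b : ninf) : ninf :=
  match a, b with
  | None, b => b
  | a, None => a
  | Some m, Some n => Some (minn m n)
  end.
Definition ninf_succ (a : ninf) : ninf := omap succn a.

Definition Dop (R : realType) (S A : finType) (P : S -> A -> S -> R)
  (sigma : S -> A) (T : {set S}) (r : S -> ninf) (s : S) : ninf :=
  if s \in T then Some 0%N
  else ninf_succ (\big[ninf_min/None]_(s' | P s (sigma s) s' != 0%R) r s').

(* Sums over first-hitting and [T]-avoiding paths are iterates of the
   transition operator of [sigma] killed on [T].  From a state of finite rank
   [m], the ranking [r] exhibits a path of positive-probability transitions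
   reaching [T] within [m] steps, so [T] is reached within [M + 1] steps with
   probability at least [delta ^+ M], where [delta] is the least positive
   transition probability and [M] the largest finite rank.  The states where
   [x] is finite have finite rank and, by [E^sigma(x) <= x], are closed under
   the transitions of [sigma] off [T]; hence the probability of avoiding [T]
   decays geometrically from them and [T] is reached almost surely.  The
   expected reward is then the series of step rewards, whose partial sums are
   bounded by [x] by iterating [E^sigma(x) <= x]. *)

From mathcomp Require Import all_boot all_order all_algebra.
From mathcomp Require Import boolp classical_sets reals ereal sequences topology normedtype.
Set Implicit Arguments.
Unset Strict Implicit.
Unset Printing Implicit Defensive.

Import Order.TTheory GRing.Theory Num.Theory.
Import numFieldNormedType.Exports.
Local Open Scope ring_scope.
Local Open Scope classical_set_scope.

Lemma nonincreasing_geometric_cvg0 (R : realType) (u : nat -> R) (N : nat) (q : R) :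
  0 <= q < 1 -> (forall n, 0 <= u n) -> (forall n, u n.+1 <= u n) ->
  (forall j, u (j * N)%N <= q ^+ j) -> u n @[n --> \oo] --> 0.
Proof.
move=> /andP[q0 q1] u0 uS uN.
have u_le := Order.NatMonotonyTheory.nonincnP uS.
have q_norm : `|q| < 1 by rewrite ger0_norm.
apply/cvgr0Pnorm_lt => eps eps0.
have [J _ qJ] := (cvgr0Pnorm_lt _).1 (cvg_expr q_norm) eps eps0.
exists (J * N)%N => // n /= Jn.
rewrite ger0_norm // (le_lt_trans (u_le _ _ Jn)) // (le_lt_trans (uN J)) //.
by have := qJ J (leqnn J); rewrite /= ger0_norm // exprn_ge0.
Qed.

Lemma big_tuple_cons (V : nmodType) (S : finType) {n : nat} (G : seq S -> V) :
  \sum_(t : n.+1.-tuple S) G t = \sum_(a : S) \sum_(t : n.-tuple S) G (a :: t).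
Proof.
rewrite pair_big /= (reindex (fun p : S * n.-tuple S => [tuple of p.1 :: p.2])) /=.
  by apply: eq_bigr => -[a t].
exists (fun t : n.+1.-tuple S => (thead t, [tuple of behead t])).
  by move=> [a t] _ /=; rewrite theadE; congr pair; apply: val_inj.
by move=> t _ /=; rewrite [in RHS](tuple_eta t).
Qed.

Lemma big_tuple0 (V : nmodType) (S : finType) (G : seq S -> V) :
  \sum_(t : 0.-tuple S) G t = G [::].
Proof. by rewrite (big_pred1 [tuple]) // => t /=; apply/esym/eqP; apply: tuple0. Qed.

Lemma avoids_cons (S : finType) (T : {set S}) (s : S) (t : seq S) :
  avoids T (s :: t) = avoids T (belast s t) && (last s t \notin T).
Proof. by rewrite /avoids lastI all_rcons andbC. Qed.

Lemma ninf_min_sel (a b : ninf) : ninf_min a b = a \/ ninf_min a b = b.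
Proof.
case: a b => [m|] [n|]; [|by left|by right|by left].
by case: (leqP m n) => [/minn_idPl|/ltnW/minn_idPr] /= ->; [left|right].
Qed.

Lemma ninf_bigmin_mem (I : finType) (Q : pred I) (F : I -> ninf) :
  let v := \big[ninf_min/None]_(i | Q i) F i in
  v = None \/ exists2 i, Q i & F i = v.
Proof.
apply: (big_ind (fun v => v = None \/ exists2 i, Q i & F i = v)) => [|a b|i Qi].
- by left.
- by case: (ninf_min_sel a b) => ->.
- by right; exists i.
Qed.

Section KilledChain.
Variables (R : realType) (S A : finType) (P : S -> A -> S -> R) (T : {set S})
  (sigma : S -> A).
Hypothesis P_ge0 : forall s s', 0 <= P s (sigma s) s'.
Hypothesis P_sum1 : forall s, \sum_(s' : S) P s (sigma s) s' = 1.

Definition killed_step (f : S -> R) (s : S) : R :=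
  if s \in T then 0 else \sum_(s' : S) P s (sigma s) s' * f s'.

Lemma sum_paths_killed n (f : S -> R) s :
  \sum_(t : n.-tuple S | avoids T (belast s t)) path_prob P sigma s t * f (last s t) =
  iter n killed_step f s.
Proof.
pose G s (t : seq S) :=
  if avoids T (belast s t) then path_prob P sigma s t * f (last s t) else 0.
elim: n s => [|n IH] s; rewrite big_mkcond.
  by rewrite (big_tuple0 (G s)) /G /= mul1r.
rewrite (big_tuple_cons (G s)) /G /=.
rewrite /killed_step; case: (s \in T) => /=; first by rewrite big1 // => a _; rewrite big1.
apply: eq_bigr => a _; rewrite -IH [in RHS]big_mkcond mulr_sumr.
by apply: eq_bigr => t _; case: ifP; rewrite ?mulr0 ?mulrA.
Qed.

Lemma first_hit_sum n s :
  \sum_(t : n.-tuple S | first_hit T s t) path_prob P sigma s t =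
  iter n killed_step (fun s' => (s' \in T)%:R) s.
Proof.
rewrite -sum_paths_killed /first_hit big_mkcondr /=; apply: eq_bigr => t _.
by case: (last s t \in T); rewrite ?mulr1 ?mulr0.
Qed.

Lemma step_reward_iter (rew : S -> R) n s :
  step_reward P sigma T rew s n =
  iter n killed_step (fun s' => (s' \notin T)%:R * rew s') s.
Proof.
rewrite /step_reward -sum_paths_killed big_mkcond [RHS]big_mkcond.
apply: eq_bigr => t _; rewrite avoids_cons.
by case: (avoids T _); case: (last s t \in T); rewrite /= ?mul1r ?mul0r ?mulr0.
Qed.

Lemma killed_step_sum (I : Type) (r : seq I) (F : I -> S -> R) s :
  \sum_(i <- r) killed_step (F i) s = killed_step (fun s' => \sum_(i <- r) F i s') s.
Proof.
rewrite /killed_step; case: (s \in T); first by rewrite big1.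
by rewrite exchange_big; apply: eq_bigr => s' _; rewrite mulr_sumr.
Qed.

Lemma killed_stepZ (b : R) f s :
  killed_step (fun s' => b * f s') s = b * killed_step f s.
Proof.
rewrite /killed_step; case: (s \in T); first by rewrite mulr0.
by rewrite mulr_sumr; apply: eq_bigr => s' _; rewrite mulrCA.
Qed.

Lemma iter_killed_stepZ n (b : R) f s :
  iter n killed_step (fun s' => b * f s') s = b * iter n killed_step f s.
Proof.
elim: n s => // n IH s; rewrite !iterS -killed_stepZ.
by congr killed_step; apply: funext.
Qed.

Lemma iter_killed_step_ge0 n f : (forall s, 0 <= f s) ->
  forall s, 0 <= iter n killed_step f s.
Proof.
move=> f0; elim: n => // n IH s; rewrite iterS /killed_step.
by case: (s \in T) => //; apply: sumr_ge0 => s' _; apply: mulr_ge0.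
Qed.

(* Probability that none of the states at positions [0 .. n-1] lies in [T]. *)
Definition avoid_prob n : S -> R := iter n killed_step (fun=> 1).

Section ClosedSet.
Variable F : {pred S}.
Hypothesis F_closed : forall s s', s \in F -> s \notin T -> P s (sigma s) s' != 0 ->
  s' \in F.

Lemma iter_killed_step_le_in n f g : {in F, forall s, f s <= g s} ->
  {in F, forall s, iter n killed_step f s <= iter n killed_step g s}.
Proof.
move=> fg; elim: n => // n IH s sF; rewrite !iterS /killed_step.
case: (boolP (s \in T)) => // sT; apply: ler_sum => s' _.
have [->|Pne] := eqVneq (P s (sigma s) s') 0; first by rewrite !mul0r.
by rewrite ler_wpM2l // IH // (F_closed sF).
Qed.

Lemma avoid_prob_geometric N q : 0 <= q -> {in F, forall s, avoid_prob N s <= q} ->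
  forall j, {in F, forall s, avoid_prob (j * N) s <= q ^+ j}.
Proof.
move=> q0 aN; elim=> [|j IH] s sF; first by rewrite expr0.
rewrite mulSn /avoid_prob iterD.
have IH1 : {in F, forall s, avoid_prob (j * N) s <= q ^+ j * 1}.
  by move=> s' /IH; rewrite mulr1.
apply: le_trans (iter_killed_step_le_in N IH1 sF) _.
by rewrite iter_killed_stepZ exprSr ler_wpM2l ?exprn_ge0 ?aN.
Qed.

End ClosedSet.

Lemma killed_step_le_one_sub f s s' : (forall s, f s <= 1) -> s \notin T ->
  killed_step f s <= 1 - P s (sigma s) s' * (1 - f s').
Proof.
move=> f1 sT; rewrite /killed_step (negbTE sT).
have -> : \sum_i P s (sigma s) i * f i = 1 - \sum_i P s (sigma s) i * (1 - f i).
  by under [in RHS]eq_bigr do rewrite mulrBr mulr1; rewrite sumrB P_sum1 opprB addrC subrK.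
rewrite lerD2l lerN2 (bigD1 s') //= lerDl.
by apply: sumr_ge0 => i _; rewrite mulr_ge0 // subr_ge0.
Qed.

Lemma avoid_prob_ge0 n s : 0 <= avoid_prob n s.
Proof. exact: iter_killed_step_ge0. Qed.

Lemma killed_step_one s : killed_step (fun=> 1) s <= 1.
Proof.
rewrite /killed_step; case: (s \in T) => //.
by under eq_bigr do rewrite mulr1; rewrite P_sum1.
Qed.

Lemma avoid_prob_le1 n s : avoid_prob n s <= 1.
Proof.
elim: n s => // n IH s; rewrite /avoid_prob iterS.
apply: le_trans (killed_step_one s); rewrite /killed_step; case: (s \in T) => //.
by apply: ler_sum => s' _; rewrite ler_wpM2l //; apply: IH.
Qed.

Lemma avoid_probS n s : avoid_prob n.+1 s <= avoid_prob n s.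
Proof.
rewrite /avoid_prob iterSr.
by apply: (@iter_killed_step_le_in predT) => // s' _; apply: killed_step_one.
Qed.

Lemma avoid_prob_le m n s : (m <= n)%N -> avoid_prob n s <= avoid_prob m s.
Proof. exact: (Order.NatMonotonyTheory.nonincnP (avoid_probS ^~ s)). Qed.

Lemma hit_avoid_sum n s :
  \sum_(k < n) iter k killed_step (fun s' => (s' \in T)%:R) s + avoid_prob n s = 1.
Proof.
elim: n s => [|n IH] s; first by rewrite big_ord0 add0r.
rewrite big_ord_recl /avoid_prob iterS /=.
under eq_bigr do rewrite add0n.
rewrite killed_step_sum /killed_step; case: (s \in T); first by rewrite !addr0.
rewrite add0r -big_split /= -[RHS](P_sum1 s); apply: eq_bigr => s' _.
by rewrite -mulrDr IH mulr1.
Qed.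

Definition min_trans_prob : R :=
  \big[Order.min/1]_(s : S) \big[Order.min/1]_(s' | P s (sigma s) s' != 0) P s (sigma s) s'.

Lemma min_trans_prob_gt0 : 0 < min_trans_prob.
Proof.
have min_gt0 (a b : R) : 0 < a -> 0 < b -> 0 < Order.min a b by rewrite lt_min => -> ->.
apply: (big_ind (fun d => 0 < d)) => // s _.
by apply: (big_ind (fun d => 0 < d)) => // s' Pne; rewrite lt0r Pne P_ge0.
Qed.

Lemma min_trans_prob_le1 : min_trans_prob <= 1.
Proof. exact: bigmin_le_id. Qed.

Lemma min_trans_prob_le s s' : P s (sigma s) s' != 0 -> min_trans_prob <= P s (sigma s) s'.
Proof.
move=> Pne; apply: le_trans (bigmin_le _ s _) _.
exact: (@bigmin_le_cond _ _ _ 1 s' (fun s' => P s (sigma s) s' != 0)).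
Qed.

Section Ranking.
Variable r : S -> ninf.
Hypothesis r_rank : forall s, ninf_le (Dop P sigma T r s) (r s).

Lemma rank_descent s m : s \notin T -> r s = Some m ->
  exists s' k, [/\ P s (sigma s) s' != 0, r s' = Some k & (k < m)%N].
Proof.
move=> sT rs; have := r_rank s; rewrite /Dop (negbTE sT) rs.
case: (ninf_bigmin_mem (fun s' => P s (sigma s) s' != 0) r) => [->|[s' Pne <-]] //.
by case rs': (r s') => [k|] //= km; exists s', k.
Qed.

(* Following a strictly rank-decreasing path, [T] is hit within [m] steps
   with probability at least [min_trans_prob ^+ m]. *)
Lemma avoid_prob_rank m s : r s = Some m ->
  avoid_prob m.+1 s <= 1 - min_trans_prob ^+ m.
Proof.
have d0 := ltW min_trans_prob_gt0; have d1 := min_trans_prob_le1.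
elim/ltn_ind: m s => m IH s rs.
have [sT|sT] := boolP (s \in T).
  by rewrite /avoid_prob iterS /killed_step sT subr_ge0 exprn_ile1.
have [s' [k [Pne rs' km]]] := rank_descent sT rs.
case: m km IH {rs} => // m km IH.
have as' : avoid_prob m.+1 s' <= 1 - min_trans_prob ^+ m.
  apply: le_trans (avoid_prob_le s' km) (le_trans (IH k km s' rs') _).
  by rewrite lerD2l lerN2 ler_wiXn2l.
rewrite /avoid_prob iterS.
apply: le_trans (killed_step_le_one_sub s' (avoid_prob_le1 m.+1) sT) _.
by rewrite lerD2l lerN2 exprS ler_pM ?exprn_ge0 ?min_trans_prob_le // lerBrDl -lerBrDr.
Qed.

Variables (rew : S -> R) (x : S -> \bar R).
Hypothesis rew_ge0 : forall s, 0 <= rew s.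
Hypothesis x_ge0 : forall s, (0 <= x s)%E.
Hypothesis x_super : forall s, (Eop P sigma T rew x s <= x s)%E.
Hypothesis x_fin_rank : forall s, (x s < +oo)%E -> r s <> None.

Lemma finite_x_closed s s' : (x s < +oo)%E -> s \notin T -> P s (sigma s) s' != 0 ->
  (x s' < +oo)%E.
Proof.
rewrite !ltey => xs sT Pne; apply: contra xs => /eqP xs'.
have := x_super s; rewrite /Eop (negbTE sT) (bigD1 s') //= xs'.
rewrite mulry gtr0_sg ?lt0r ?Pne ?P_ge0 // mul1e addeCA addye ?leye_eq //.
rewrite -ltNye (lt_le_trans (ltNyr 0)) // adde_ge0 ?lee_fin //.
by apply: sume_ge0 => i _; rewrite mule_ge0 ?lee_fin.
Qed.

Lemma avoid_prob_cvg0 s : (x s < +oo)%E -> avoid_prob n s @[n --> \oo] --> 0.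
Proof.
have d0 := ltW min_trans_prob_gt0; have d1 := min_trans_prob_le1.
pose M := (\max_(s : S) odflt 0 (r s))%N; pose q := 1 - min_trans_prob ^+ M.
have aM : {in [pred s | (x s < +oo)%E], forall s, avoid_prob M.+1 s <= q}.
  move=> s' xs'; case rs': (r s') => [m|]; last by have := x_fin_rank xs'; rewrite rs'.
  have mM : (m.+1 <= M.+1)%N.
    by rewrite ltnS; have := @leq_bigmax _ (fun s => odflt 0 (r s)) s'; rewrite rs'.
  apply: le_trans (avoid_prob_le s' mM) (le_trans (avoid_prob_rank rs') _).
  by rewrite lerD2l lerN2 ler_wiXn2l.
have q0 : 0 <= q by rewrite subr_ge0 exprn_ile1.
have q1 : q < 1 by rewrite gtrBl exprn_gt0 ?min_trans_prob_gt0.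
move=> xs; apply: (nonincreasing_geometric_cvg0 (N := M.+1) (q := q)) => [|n|n|j].
- by rewrite q0 q1.
- exact: avoid_prob_ge0.
- exact: avoid_probS.
- exact: (avoid_prob_geometric finite_x_closed q0 aM).
Qed.

Lemma reach_prob_finite s : (x s < +oo)%E -> reach_prob P sigma T s = 1%E.
Proof.
move=> xs; rewrite /reach_prob; under eq_eseriesr do rewrite first_hit_sum.
apply: cvg_lim => //.
have -> : (fun n => \sum_(0 <= k < n) (iter k killed_step (fun s' => (s' \in T)%:R) s)%:E)%E
    = (fun n => (1 - avoid_prob n s)%:E).
  by apply: funext => n; rewrite sumEFin big_mkord -[in RHS](hit_avoid_sum n s) addrK.
apply: cvg_EFin; first exact: nearW.
by rewrite -[X in _ --> X]subr0; apply: cvgB; [apply: cvg_cst|apply: avoid_prob_cvg0].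
Qed.

Lemma exp_reward_partial_le n s :
  ((\sum_(k < n) iter k killed_step (fun s' => (s' \notin T)%:R * rew s') s)%:E <= x s)%E.
Proof.
elim: n s => [|n IH] s; first by rewrite big_ord0.
rewrite big_ord_recl /=; under eq_bigr do rewrite add0n.
rewrite killed_step_sum /killed_step.
have [sT|sT] := boolP (s \in T); first by rewrite mul0r addr0.
apply: le_trans (x_super s); rewrite /Eop (negbTE sT) mul1r EFinD leeD2l //.
rewrite (bigID (fun s' => P s (sigma s) s' != 0)) /= [X in _ + X]big1 ?addr0.
  by rewrite -sumEFin; apply: lee_sum => s' _; rewrite EFinM lee_wpmul2l ?lee_fin.
by move=> s' /negPn/eqP ->; rewrite mul0r.
Qed.

Lemma exp_reward_le s : (exp_reward P sigma T rew s <= x s)%E.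
Proof.
have [xs|] := boolP (x s < +oo)%E; last by rewrite ltey negbK => /eqP ->; apply: leey.
rewrite /exp_reward reach_prob_finite // eqxx.
under eq_eseriesr do rewrite step_reward_iter.
apply: lime_le.
  apply: is_cvg_nneseries => n _ _; rewrite lee_fin iter_killed_step_ge0 // => s'.
  by rewrite mulr_ge0.
by apply: nearW => n; rewrite sumEFin big_mkord exp_reward_partial_le.
Qed.

End Ranking.

End KilledChain.

Theorem proposition10 (R : realType) (S A : finType) (P : S -> A -> S -> R)
  (T : {set S}) (rew : S -> R) (x : S -> \bar R) (r : S -> ninf) (sigma : S -> A) :
  is_MDP P ->
  (forall s, 0 <= rew s) ->
  (forall s, (0 <= x s)%E) ->
  is_strategy P sigma ->
  (forall s, ninf_le (Dop P sigma T r s) (r s)) ->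
  (forall s, (Eop P sigma T rew x s <= x s)%E) ->
  (forall s, (x s < +oo)%E -> r s <> None) ->
  forall s, (exp_reward_min P T rew s <= exp_reward P sigma T rew s)%E /\
            (exp_reward P sigma T rew s <= x s)%E.
Proof.
move=> [P01 _ _] rew_ge0 x_ge0 sigma_strat r_rank x_super x_fin_rank s.
have P_ge0 s1 s2 : 0 <= P s1 (sigma s1) s2 by case/andP: (P01 s1 (sigma s1) s2).
have P_sum1 s1 : \sum_s2 P s1 (sigma s1) s2 = 1 by apply/eqP; apply: sigma_strat.
split; first by apply: ereal_inf_lbound; exists sigma.
exact: (exp_reward_le P_ge0 P_sum1 r_rank rew_ge0 x_ge0 x_super x_fin_rank s).
Qed.
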